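(* Let $\overline\eta\in(-\frac{\pi}{2},\frac{\pi}{2})^m$ and $\overline V\in\mathbb{R}^n_{>0}$ satisfy $E(\overline\eta)\overline V=\overline E_{fd}$ and condition $(\ast)$ below. Consider the system \[ \dot\eta=v,\qquad T\dot V=-E(\eta)V+\overline E_{fd},\qquad \lambda=\Gamma(V)\boldsymbol{\sin}(\eta), \] with input $v\in\mathbb{R}^m$ and output $\lambda\in\mathbb{R}^m$, and let $\overline v=\mathbf{0}$, $\overline\lambda=\Gamma(\overline V)\boldsymbol{\sin}(\overline\eta)$. Then $W_2$ (defined below) is positive definite in a neighbourhood of $(\overline\eta,\overline V)$ and satisfies along solutions \[ \dot W_2=-(\nabla_VW_2)^TT^{-1}\nabla_VW_2+(\lambda-\overline\lambda)^T(v-\overline v), \] i.e. the system is incrementally passive with respect to the constant equilibrium $(\overline\eta,\overline V)$.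
   Context: Standing setup (power network model). $\mathcal{G}=(\mathcal{V},\mathcal{E})$ is a connected undirected graph with node set $\{1,\dots,n\}$ and $m$ edges; each edge $k=\{i,j\}$ is given an arbitrary orientation, and $D\in\mathbb{R}^{n\times m}$ is the incidence matrix: $d_{ik}=+1$ if $i$ is the positive end of edge $k$, $-1$ if $i$ is the negative end, $0$ otherwise. $|D|$ denotes the matrix of entrywise absolute values of $D$. $\mathbf{1}_n$ is the all-ones vector. For each edge $k=\{i,j\}$ there is a susceptance $B_{ij}=B_{ji}>0$; each node has a self-susceptance $B_{ii}<0$ with $|B_{ii}|>\sum_{j\in\mathcal{N}_i}|B_{ij}|$ ($\mathcal{N}_i$ the neighbours of $i$ in $\mathcal{G}$), and reactances $X_{di}>X'_{di}>0$. For $V\in\mathbb{R}^n$, $\Gamma(V)=\mathrm{diag}(\gamma_1,\dots,\gamma_m)$ with $\gamma_k=V_iV_jB_{ij}$ for edge $k=\{i,j\}$. For $\eta\in\mathbb{R}^m$, $E(\eta)\in\mathbb{R}^{n\times n}$ is the symmetric matrix with $E_{ii}=\frac{1-B_{ii}(X_{di}-X'_{di})}{X_{di}-X'_{di}}$, $E_{ij}=-B_{ij}\cos(\eta_k)$ if $k=\{i,j\}$ is an edge, and $E_{ij}=0$ otherwise. $\boldsymbol{\sin}$, $\boldsymbol{\cos}$ act componentwise. $M,A,T$ are diagonal positive definite $n\times n$ matrices ($A=\mathrm{diag}(A_i)$), and $\overline E_{fd}\in\mathbb{R}^n$ is a constant vector. The network dynamics, with input $u\in\mathbb{R}^n$ (power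 generation) and demand $P^l$, are \[ \dot\eta=D^T\omega,\quad M\dot\omega=u-D\Gamma(V)\boldsymbol{\sin}(\eta)-A\omega-P^l,\quad T\dot V=-E(\eta)V+\overline E_{fd},\quad y=\omega, \] with state $(\eta,\omega,V)\in\mathbb{R}^m\times\mathbb{R}^n\times\mathbb{R}^n$. Condition $(\ast)$ on $(\overline\eta,\overline V)$: \[ E(\overline\eta)-\mathrm{diag}(\overline V)^{-1}|D|\Gamma(\overline V)\mathrm{diag}(\boldsymbol{\sin}(\overline\eta))\mathrm{diag}(\boldsymbol{\cos}(\overline\eta))^{-1}\mathrm{diag}(\boldsymbol{\sin}(\overline\eta))|D|^T\mathrm{diag}(\overline V)^{-1}>0. \] Storage function: $W_2(\eta,\overline\eta,V,\overline V)=-\mathbf{1}_m^T\Gamma(V)\boldsymbol{\cos}(\eta)+\mathbf{1}_m^T\Gamma(\overline V)\boldsymbol{\cos}(\overline\eta)-(\Gamma(\overline V)\boldsymbol{\sin}(\overline\eta))^T(\eta-\overline\eta)-\overline E_{fd}^T(V-\overline V)+\tfrac12V^TFV-\tfrac12\overline V^TF\overline V$, where $F$ is diagonal with $F_{ii}=\frac{1-B_{ii}(X_{di}-X'_{di})}{X_{di}-X'_{di}}$; note $\nabla_VW_2=E(\eta)V-\overline E_{fd}$. *)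

From Stdlib Require Export Reals Relations.
Open Scope R_scope.

Fixpoint rsum (N : nat) (f : nat -> R) : R :=
  match N with O => 0 | S p => rsum p f + f p end.

(* Graph: nodes 0..n-1, edges 0..m-1; edge k has positive end [ep k] and
   negative end [en k] (the chosen orientation); incidence d_ik = +1 / -1. *)

Definition edge_is (ep en : nat -> nat) (k i j : nat) : bool :=
  ((Nat.eqb (ep k) i && Nat.eqb (en k) j) || (Nat.eqb (ep k) j && Nat.eqb (en k) i))%bool.

Definition absD (ep en : nat -> nat) (i k : nat) : R :=
  if (Nat.eqb (ep k) i || Nat.eqb (en k) i)%bool then 1 else 0.

Definition other (ep en : nat -> nat) (i k : nat) : nat :=
  if Nat.eqb (ep k) i then en k else ep k.

Definition adj (m : nat) (ep en : nat -> nat) (i j : nat) : Prop :=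
  exists k, (k < m)%nat /\ edge_is ep en k i j = true.

Definition connected (n m : nat) (ep en : nat -> nat) : Prop :=
  forall i j, (i < n)%nat -> (j < n)%nat -> clos_refl_trans nat (adj m ep en) i j.

Definition gam (ep en : nat -> nat) (B : nat -> nat -> R) (V : nat -> R) (k : nat) : R :=
  V (ep k) * V (en k) * B (ep k) (en k).

Definition Fd (B : nat -> nat -> R) (Xd Xdp : nat -> R) (i : nat) : R :=
  (1 - B i i * (Xd i - Xdp i)) / (Xd i - Xdp i).

Definition Emat (m : nat) (ep en : nat -> nat) (B : nat -> nat -> R) (Xd Xdp : nat -> R)
  (eta : nat -> R) (i j : nat) : R :=
  if Nat.eqb i j then Fd B Xd Xdp i
  else rsum m (fun k => if edge_is ep en k i j then - B i j * cos (eta k) else 0).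

Definition EV (n m : nat) (ep en : nat -> nat) (B : nat -> nat -> R) (Xd Xdp : nat -> R)
  (eta V : nat -> R) (i : nat) : R :=
  rsum n (fun j => Emat m ep en B Xd Xdp eta i j * V j).

Definition W2 (n m : nat) (ep en : nat -> nat) (B : nat -> nat -> R) (Xd Xdp Efd : nat -> R)
  (eta etab V Vb : nat -> R) : R :=
  - rsum m (fun k => gam ep en B V k * cos (eta k))
  + rsum m (fun k => gam ep en B Vb k * cos (etab k))
  - rsum m (fun k => gam ep en B Vb k * sin (etab k) * (eta k - etab k))
  - rsum n (fun i => Efd i * (V i - Vb i))
  + / 2 * rsum n (fun i => V i * Fd B Xd Xdp i * V i)
  - / 2 * rsum n (fun i => Vb i * Fd B Xd Xdp i * Vb i).

Definition Qmat (m : nat) (ep en : nat -> nat) (B : nat -> nat -> R) (Xd Xdp : nat -> R)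
  (etab Vb : nat -> R) (i j : nat) : R :=
  Emat m ep en B Xd Xdp etab i j
  - / Vb i * rsum m (fun k => absD ep en i k * gam ep en B Vb k
        * (sin (etab k) * / cos (etab k) * sin (etab k)) * absD ep en j k) * / Vb j.

Definition posdef (n : nat) (Q : nat -> nat -> R) : Prop :=
  forall x : nat -> R, (exists i, (i < n)%nat /\ x i <> 0) ->
    rsum n (fun i => rsum n (fun j => x i * Q i j * x j)) > 0.

From Stdlib Require Import Reals Bool Lra Lia.
Open Scope R_scope.

(* Expand W2 to second order at the equilibrium.  The equilibrium equation
   E(etab) Vb = Efd cancels the linear terms, and completing the square in each
   angle deviation d_k turns the quadratic part into
     1/2 u^T Q u + 1/2 sum_k gam_k(Vb) cos(etab_k) (d_k + tan(etab_k) w_k)^2,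
   where u = V - Vb, w_k is the relative voltage deviation across edge k and Q
   is the matrix of condition (star).  Since Q is positive definite and
   cos(etab_k) > 0 this quadratic part is coercive in (d, u), while the Taylor
   remainder of cos makes the rest cubic; hence W2 > 0 on a small punctured box.
   The dissipation equality is the chain rule: the eta-gradient of W2 is
   lambda - lambda_bar and its V-gradient is E(eta) V - Efd = - T dV/dt. *)

Lemma rsum_ext N f g : (forall i, (i < N)%nat -> f i = g i) -> rsum N f = rsum N g.
Proof.
  induction N as [|N IH]; intros H; simpl; [reflexivity|].
  rewrite IH by (intros; apply H; lia). rewrite H by lia. reflexivity.
Qed.

Lemma rsum_0 N : rsum N (fun _ => 0) = 0.
Proof. induction N as [|N IH]; simpl; [|rewrite IH]; ring. Qed.

Lemma rsum_plus N f g : rsum N (fun i => f i + g i) = rsum N f + rsum N g.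
Proof. induction N as [|N IH]; simpl; [|rewrite IH]; ring. Qed.

Lemma rsum_minus N f g : rsum N (fun i => f i - g i) = rsum N f - rsum N g.
Proof. induction N as [|N IH]; simpl; [|rewrite IH]; ring. Qed.

Lemma rsum_opp N f : rsum N (fun i => - f i) = - rsum N f.
Proof. induction N as [|N IH]; simpl; [|rewrite IH]; ring. Qed.

Lemma rsum_scal N c f : rsum N (fun i => c * f i) = c * rsum N f.
Proof. induction N as [|N IH]; simpl; [|rewrite IH]; ring. Qed.

Lemma rsum_swap N M (f : nat -> nat -> R) :
  rsum N (fun i => rsum M (fun j => f i j)) = rsum M (fun j => rsum N (fun i => f i j)).
Proof.
  induction N as [|N IH]; simpl; [symmetry; apply rsum_0|].
  rewrite IH, <- rsum_plus; reflexivity.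
Qed.

Lemma rsum_delta N a f : (a < N)%nat ->
  rsum N (fun j => if Nat.eqb a j then f j else 0) = f a.
Proof.
  induction N as [|N IH]; intros Ha; [lia|]; simpl.
  destruct (Nat.eqb_spec a N) as [->|Hne].
  - rewrite (rsum_ext _ _ (fun _ => 0)), rsum_0; [ring|].
    intros i Hi; destruct (Nat.eqb_spec N i); [lia|reflexivity].
  - rewrite IH by lia; ring.
Qed.

Lemma rsum_le N f g : (forall i, (i < N)%nat -> f i <= g i) -> rsum N f <= rsum N g.
Proof.
  induction N as [|N IH]; intros H; simpl; [lra|].
  assert (f N <= g N) by (apply H; lia).
  assert (rsum N f <= rsum N g) by (apply IH; intros; apply H; lia); lra.
Qed.

Lemma rsum_nonneg N f : (forall i, (i < N)%nat -> 0 <= f i) -> 0 <= rsum N f.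
Proof. intros H; rewrite <- (rsum_0 N); apply rsum_le, H. Qed.

Lemma rsum_term_le N f k : (forall i, (i < N)%nat -> 0 <= f i) -> (k < N)%nat ->
  f k <= rsum N f.
Proof.
  induction N as [|N IH]; intros H Hk; [lia|]; simpl.
  assert (0 <= f N) by (apply H; lia).
  destruct (Nat.eq_dec k N) as [->|Hne].
  - assert (0 <= rsum N f) by (apply rsum_nonneg; intros; apply H; lia); lra.
  - assert (f k <= rsum N f) by (apply IH; [intros; apply H; lia|lia]); lra.
Qed.

Lemma rsum_pos N f k : (forall i, (i < N)%nat -> 0 <= f i) -> (k < N)%nat -> 0 < f k ->
  0 < rsum N f.
Proof. intros H Hk Hfk; pose proof (rsum_term_le N f k H Hk); lra. Qed.

Lemma rsum_le_const N f C : (forall i, (i < N)%nat -> f i <= C) -> rsum N f <= INR N * C.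
Proof.
  induction N as [|N IH]; intros H; cbn [rsum]; [simpl; lra|].
  assert (f N <= C) by (apply H; lia).
  assert (rsum N f <= INR N * C) by (apply IH; intros; apply H; lia).
  rewrite S_INR; lra.
Qed.

Lemma rsum_abs N f : Rabs (rsum N f) <= rsum N (fun i => Rabs (f i)).
Proof.
  induction N as [|N IH]; simpl; [rewrite Rabs_R0; lra|].
  eapply Rle_trans; [apply Rabs_triang|lra].
Qed.

Lemma rsum_cauchy_schwarz N b x :
  rsum N (fun i => b i * x i) * rsum N (fun i => b i * x i) <=
  rsum N (fun i => b i * b i) * rsum N (fun i => x i * x i).
Proof.
  induction N as [|N IH]; simpl; [lra|].
  set (S := rsum N (fun i => b i * x i)) in *.
  set (A := rsum N (fun i => b i * b i)) in *; set (C := rsum N (fun i => x i * x i)) in *.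
  assert (0 <= A) by (apply rsum_nonneg; intros; nra).
  assert (0 <= C) by (apply rsum_nonneg; intros; nra).
  assert (K : 0 <= A * (A * (x N * x N) + b N * b N * C - 2 * S * b N * x N)).
  { replace (A * (A * (x N * x N) + b N * b N * C - 2 * S * b N * x N))
      with ((A * x N - b N * S) * (A * x N - b N * S) + b N * b N * (A * C - S * S)) by ring.
    assert (0 <= b N * b N * (A * C - S * S)) by (apply Rmult_le_pos; [nra|lra]).
    pose proof (Rle_0_sqr (A * x N - b N * S)); unfold Rsqr in *; lra. }
  destruct (Req_dec A 0) as [HA|HA].
  - assert (S = 0) by (rewrite HA in IH; nra). rewrite HA, H1. nra.
  - assert (0 <= A * (x N * x N) + b N * b N * C - 2 * S * b N * x N).
    { destruct (Rle_dec 0 (A * (x N * x N) + b N * b N * C - 2 * S * b N * x N)); [assumption|].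
      assert (A * (A * (x N * x N) + b N * b N * C - 2 * S * b N * x N) < 0)
        by (apply Rmult_pos_neg; lra). lra. }
    nra.
Qed.

Lemma finite_pos_lower_bound N (f : nat -> R) : (forall k, (k < N)%nat -> 0 < f k) ->
  exists a, 0 < a /\ forall k, (k < N)%nat -> a <= f k.
Proof.
  induction N as [|N IH]; intros H; [exists 1; split; [lra|intros; lia]|].
  destruct IH as [a [Ha Hle]]; [intros; apply H; lia|].
  assert (0 < f N) by (apply H; lia).
  exists (Rmin a (f N)); split; [apply Rmin_glb_lt; lra|].
  intros k Hk; destruct (Nat.eq_dec k N) as [->|]; [apply Rmin_r|].
  eapply Rle_trans; [apply Rmin_l|apply Hle; lia].
Qed.

Lemma finite_upper_bound N (f : nat -> R) :
  exists C, 0 <= C /\ forall k, (k < N)%nat -> f k <= C.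
Proof.
  induction N as [|N IH]; [exists 0; split; [lra|intros; lia]|].
  destruct IH as [C [HC Hle]].
  exists (Rmax C (f N)); split; [eapply Rle_trans; [exact HC|apply Rmax_l]|].
  intros k Hk; destruct (Nat.eq_dec k N) as [->|]; [apply Rmax_r|].
  eapply Rle_trans; [apply Hle; lia|apply Rmax_l].
Qed.

Definition qf N (Q : nat -> nat -> R) (x : nat -> R) : R :=
  rsum N (fun i => rsum N (fun j => x i * Q i j * x j)).

Lemma qf_ext N Q x y : (forall i, (i < N)%nat -> x i = y i) -> qf N Q x = qf N Q y.
Proof.
  intros H; unfold qf; apply rsum_ext; intros i Hi; apply rsum_ext; intros j Hj.
  rewrite !H by assumption; reflexivity.
Qed.

Lemma qf_S N Q x :
  qf (S N) Q x = qf N Q x + x N * rsum N (fun i => (Q i N + Q N i) * x i) + Q N N * x N * x N.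
Proof.
  unfold qf; cbn [rsum]; rewrite rsum_plus.
  replace (x N * rsum N (fun i => (Q i N + Q N i) * x i))
    with (rsum N (fun i => x i * Q i N * x N) + rsum N (fun j => x N * Q N j * x j)); [ring|].
  rewrite <- rsum_plus, <- rsum_scal; apply rsum_ext; intros; ring.
Qed.

Lemma posdef_diag_last N Q : posdef (S N) Q -> 0 < Q N N.
Proof.
  intros HQ.
  set (e := fun i => if Nat.eqb i N then 1 else 0).
  assert (He : forall i, (i < N)%nat -> e i = 0).
  { intros i Hi; unfold e; destruct (Nat.eqb_spec i N); [lia|reflexivity]. }
  assert (HeN : e N = 1) by (unfold e; rewrite Nat.eqb_refl; reflexivity).
  assert (Hpos : qf (S N) Q e > 0) by (apply HQ; exists N; split; [lia|lra]).
  rewrite qf_S, (qf_ext N Q e (fun _ => 0) He),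
    (rsum_ext N _ (fun _ => 0)), HeN in Hpos by (intros; rewrite He by assumption; ring).
  unfold qf in Hpos; rewrite (rsum_ext N _ (fun _ => 0)), !rsum_0 in Hpos.
  - lra.
  - intros; rewrite (rsum_ext N _ (fun _ => 0)), rsum_0; [reflexivity|intros; ring].
Qed.

(* Schur complement of the last diagonal entry: eliminates x N by completing the square. *)
Definition schur N (Q : nat -> nat -> R) (i j : nat) : R :=
  Q i j - (Q i N + Q N i) * (Q j N + Q N j) / (4 * Q N N).

Lemma qf_schur N Q x : Q N N <> 0 ->
  let s := rsum N (fun i => (Q i N + Q N i) * x i) in
  qf (S N) Q x = qf N (schur N Q) x + Q N N * (x N + s / (2 * Q N N)) * (x N + s / (2 * Q N N)).
Proof.
  intros Ha s; rewrite qf_S; fold s.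
  assert (Hs : qf N (schur N Q) x = qf N Q x - s * s / (4 * Q N N)).
  { unfold qf, schur.
    transitivity (rsum N (fun i => rsum N (fun j => x i * Q i j * x j)
                    - (Q i N + Q N i) * x i / (4 * Q N N) * s)).
    - apply rsum_ext; intros i Hi; unfold s; rewrite <- rsum_scal, <- rsum_minus.
      apply rsum_ext; intros; field; assumption.
    - rewrite rsum_minus; f_equal.
      rewrite (rsum_ext N _ (fun i => (s / (4 * Q N N)) * ((Q i N + Q N i) * x i)))
        by (intros; field; assumption).
      rewrite rsum_scal; fold s; field; assumption. }
  rewrite Hs; field; assumption.
Qed.

Lemma posdef_schur N Q : posdef (S N) Q -> posdef N (schur N Q).
Proof.
  intros HQ y [i [Hi Hy]].
  pose proof (posdef_diag_last N Q HQ) as Ha.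
  set (s := rsum N (fun i => (Q i N + Q N i) * y i)).
  set (x := fun j => if Nat.eqb j N then - s / (2 * Q N N) else y j).
  assert (Exy : forall j, (j < N)%nat -> x j = y j).
  { intros j Hj; unfold x; destruct (Nat.eqb_spec j N); [lia|reflexivity]. }
  assert (Hx : qf (S N) Q x > 0) by (apply HQ; exists i; split; [lia|rewrite Exy; auto]).
  rewrite qf_schur in Hx by lra; cbv zeta in Hx.
  rewrite (qf_ext N _ x y Exy), (rsum_ext N _ (fun i => (Q i N + Q N i) * y i)) in Hx
    by (intros; rewrite Exy; auto).
  fold s in Hx; unfold x in Hx; rewrite Nat.eqb_refl in Hx.
  replace (- s / (2 * Q N N) + s / (2 * Q N N)) with 0 in Hx by (field; lra).
  change (qf N (schur N Q) y > 0); lra.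
Qed.

Lemma coercive_extend a c S2 Y z t k : 0 < a -> 0 <= S2 -> 0 <= Y -> 0 <= k ->
  (2 * a * t) * (2 * a * t) <= S2 * Y -> 2 * k <= a -> k * (1 + S2 / (2 * (a * a))) <= c ->
  k * (Y + (z - t) * (z - t)) <= c * Y + a * z * z.
Proof.
  intros Ha HS2 HY Hk Ht Hka Hkc.
  assert (Hzt : (z - t) * (z - t) <= 2 * (z * z) + 2 * (t * t)).
  { pose proof (Rle_0_sqr (z + t)); unfold Rsqr in *; lra. }
  assert (Htt : 2 * (t * t) <= S2 * Y / (2 * (a * a))).
  { apply (Rmult_le_reg_r (2 * (a * a))); [nra|].
    replace (S2 * Y / (2 * (a * a)) * (2 * (a * a))) with (S2 * Y) by (field; lra); nra. }
  assert (k * (Y + (z - t) * (z - t)) <= k * Y + 2 * k * (z * z) + k * (S2 * Y / (2 * (a * a)))) by nra.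
  assert (k * (S2 * Y / (2 * (a * a))) = (k * (S2 / (2 * (a * a)))) * Y) by (field; lra).
  assert (2 * k * (z * z) <= a * z * z) by nra.
  assert (k * (1 + S2 / (2 * (a * a))) * Y <= c * Y) by (apply Rmult_le_compat_r; lra).
  replace (k * (1 + S2 / (2 * (a * a))) * Y) with (k * Y + k * (S2 / (2 * (a * a))) * Y) in * by ring.
  lra.
Qed.

Lemma posdef_coercive N Q : posdef N Q ->
  exists c, 0 < c /\ forall x, c * rsum N (fun i => x i * x i) <= qf N Q x.
Proof.
  revert Q; induction N as [|N IH]; intros Q HQ.
  - exists 1; split; [lra|]; intros x; unfold qf; simpl; lra.
  - pose proof (posdef_diag_last N Q HQ) as Ha; set (a := Q N N) in *.
    destruct (IH _ (posdef_schur N Q HQ)) as [c [Hc Hcoer]].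
    set (S2 := rsum N (fun i => (Q i N + Q N i) * (Q i N + Q N i))).
    assert (HS2 : 0 <= S2) by (apply rsum_nonneg; intros; apply Rle_0_sqr).
    set (r := S2 / (2 * (a * a))).
    assert (Hr : 0 <= r) by (apply Rmult_le_pos; [lra|left; apply Rinv_0_lt_compat; nra]).
    set (k := Rmin (a / 2) (c / (1 + r))).
    exists k; split; [apply Rmin_glb_lt; [lra|apply Rdiv_lt_0_compat; lra]|].
    intros x; rewrite qf_schur by (change (a <> 0); lra); cbv zeta; cbn [rsum]; fold a.
    set (s := rsum N (fun i => (Q i N + Q N i) * x i)).
    set (Y := rsum N (fun i => x i * x i)).
    assert (HY : 0 <= Y) by (apply rsum_nonneg; intros; apply Rle_0_sqr).
    pose proof (Hcoer x) as Hx; fold Y in Hx.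
    assert (Hk : k * (Y + x N * x N) <= c * Y + a * (x N + s / (2 * a)) * (x N + s / (2 * a))).
    { replace (x N) with ((x N + s / (2 * a)) - s / (2 * a)) at 1 2 by ring.
      apply coercive_extend with S2; try lra.
      - apply Rmin_glb; [lra|left; apply Rdiv_lt_0_compat; lra].
      - replace (2 * a * (s / (2 * a))) with s by (field; lra).
        apply rsum_cauchy_schwarz.
      - pose proof (Rmin_l (a / 2) (c / (1 + r))) as Hka; fold k in Hka; lra.
      - pose proof (Rmin_r (a / 2) (c / (1 + r))) as Hkc; fold k in Hkc.
        apply (Rmult_le_compat_r (1 + r)) in Hkc; [|lra].
        replace (c / (1 + r) * (1 + r)) with c in Hkc
          by (field; lra); exact Hkc. }
    lra.
Qed.

Lemma abs_mul_le a b A C : Rabs a <= A -> Rabs b <= C -> Rabs (a * b) <= A * C.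
Proof. intros; rewrite Rabs_mult; apply Rmult_le_compat; auto using Rabs_pos. Qed.

Lemma sqr_Rabs x : Rabs x * Rabs x = x * x.
Proof. rewrite <- Rabs_mult; apply Rabs_right; apply Rle_ge, Rle_0_sqr. Qed.

Lemma cos_taylor4 d : -1 <= d <= 1 ->
  1 - d * d / 2 <= cos d <= 1 - d * d / 2 + d * d * (d * d) / 24.
Proof.
  intros Hd; destruct (pre_cos_bound d 0) as [H1 H2]; try lra.
  unfold cos_approx, cos_term in *; simpl in *; lra.
Qed.

Lemma sin_taylor3 d : -1 <= d <= 1 -> Rabs (sin d - d) <= Rabs d * (d * d) / 6.
Proof.
  assert (Hpos : forall a, 0 <= a <= 1 -> Rabs (sin a - a) <= a * (a * a) / 6).
  { intros a Ha; destruct (pre_sin_bound a 0) as [H1 H2]; try lra.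
    unfold sin_approx, sin_term in *; simpl in *.
    assert (0 <= a * (a * a)) by (apply Rmult_le_pos; nra).
    assert (a * (a * a) * (a * a) <= a * (a * a) * 1) by (apply Rmult_le_compat_l; nra).
    apply Rabs_le; split; lra. }
  intros Hd; destruct (Rle_dec 0 d) as [Hd0|Hd0].
  - rewrite (Rabs_right d) by lra; apply Hpos; lra.
  - rewrite (Rabs_left d) by lra.
    replace (sin d - d) with (- (sin (- d) - - d)) by (rewrite sin_neg; ring).
    rewrite Rabs_Ropp; replace (d * d) with (- d * - d) by ring; apply Hpos; lra.
Qed.

Lemma cos_gap_bounds x y dl : Rabs (y - x) <= dl -> dl <= 1 ->
  Rabs (cos x - cos y - sin x * (y - x)) <= (y - x) * (y - x) /\
  Rabs (cos x - cos y - sin x * (y - x) - / 2 * cos x * ((y - x) * (y - x)))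
    <= dl * ((y - x) * (y - x)).
Proof.
  intros Hd Hdl; set (d := y - x) in *.
  replace y with (x + d) by (unfold d; ring); rewrite cos_plus.
  assert (Hd1 : -1 <= d <= 1) by (unfold Rabs in Hd; destruct (Rcase_abs d); lra).
  destruct (cos_taylor4 d Hd1) as [C1 C2]; pose proof (sin_taylor3 d Hd1) as S1.
  assert (Acx : Rabs (cos x) <= 1) by (apply Rabs_le; apply COS_bound).
  assert (Asx : Rabs (sin x) <= 1) by (apply Rabs_le; apply SIN_bound).
  assert (dd : 0 <= d * d) by apply Rle_0_sqr.
  assert (Hd3 : Rabs d * (d * d) <= dl * (d * d)) by (apply Rmult_le_compat_r; lra).
  assert (Hd4 : d * d * (d * d) <= dl * (d * d)).
  { apply Rmult_le_compat_r; [assumption|]; rewrite <- sqr_Rabs.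
    pose proof (Rabs_pos d); nra. }
  assert (Hdl1 : dl * (d * d) <= 1 * (d * d)) by (apply Rmult_le_compat_r; lra).
  pose proof (COS_bound d).
  assert (Hsin : Rabs (sin x * (sin d - d)) <= 1 * (Rabs d * (d * d) / 6))
    by (apply abs_mul_le; auto).
  split.
  - replace (cos x - (cos x * cos d - sin x * sin d) - sin x * d)
      with (cos x * (1 - cos d) + sin x * (sin d - d)) by ring.
    eapply Rle_trans; [apply Rabs_triang|].
    assert (Rabs (cos x * (1 - cos d)) <= 1 * (d * d / 2))
      by (apply abs_mul_le; auto; apply Rabs_le; lra).
    lra.
  - replace (cos x - (cos x * cos d - sin x * sin d) - sin x * d - / 2 * cos x * (d * d))
      with (cos x * (1 - cos d - d * d / 2) + sin x * (sin d - d)) by field.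
    eapply Rle_trans; [apply Rabs_triang|].
    assert (Rabs (cos x * (1 - cos d - d * d / 2)) <= 1 * (d * d * (d * d) / 24))
      by (apply abs_mul_le; auto; apply Rabs_le; lra).
    lra.
Qed.

Lemma dlim_plus f g t a b l : derivable_pt_lim f t a -> derivable_pt_lim g t b -> l = a + b ->
  derivable_pt_lim (fun s => f s + g s) t l.
Proof. intros Ha Hb ->; exact (derivable_pt_lim_plus f g t a b Ha Hb). Qed.

Lemma dlim_minus f g t a b l : derivable_pt_lim f t a -> derivable_pt_lim g t b -> l = a - b ->
  derivable_pt_lim (fun s => f s - g s) t l.
Proof. intros Ha Hb ->; exact (derivable_pt_lim_minus f g t a b Ha Hb). Qed.

Lemma dlim_mult f g t a b l : derivable_pt_lim f t a -> derivable_pt_lim g t b ->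
  l = a * g t + f t * b -> derivable_pt_lim (fun s => f s * g s) t l.
Proof. intros Ha Hb ->; exact (derivable_pt_lim_mult f g t a b Ha Hb). Qed.

Lemma dlim_opp f t a l : derivable_pt_lim f t a -> l = - a -> derivable_pt_lim (fun s => - f s) t l.
Proof. intros Ha ->; exact (derivable_pt_lim_opp f t a Ha). Qed.

Lemma dlim_const c t l : l = 0 -> derivable_pt_lim (fun _ => c) t l.
Proof. intros ->; apply derivable_pt_lim_const. Qed.

Lemma dlim_cos f t a l : derivable_pt_lim f t a -> l = - sin (f t) * a ->
  derivable_pt_lim (fun s => cos (f s)) t l.
Proof.
  intros Ha ->; apply (derivable_pt_lim_comp f cos t a (- sin (f t)) Ha), derivable_pt_lim_cos.
Qed.

Lemma dlim_rsum N (f : nat -> R -> R) df t :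
  (forall k, (k < N)%nat -> derivable_pt_lim (f k) t (df k)) ->
  derivable_pt_lim (fun s => rsum N (fun k => f k s)) t (rsum N df).
Proof.
  induction N as [|N IH]; intros H; simpl; [apply dlim_const; reflexivity|].
  apply (dlim_plus (fun s => rsum N (fun k => f k s)) (f N) t (rsum N df) (df N)); auto.
Qed.

Lemma rsum2_delta N a b (g : nat -> nat -> R) : (a < N)%nat -> (b < N)%nat ->
  rsum N (fun i => rsum N (fun j => if Nat.eqb a i && Nat.eqb b j then g i j else 0)) = g a b.
Proof.
  intros Ha Hb; rewrite (rsum_ext _ _ (fun i => if Nat.eqb a i then g i b else 0)).
  - exact (rsum_delta N a (fun i => g i b) Ha).
  - intros i Hi; destruct (Nat.eqb a i); simpl.
    + exact (rsum_delta N b (g i) Hb).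
    + apply rsum_0.
Qed.

Definition wrel (ep en : nat -> nat) (V Vb : nat -> R) (k : nat) : R :=
  (V (ep k) - Vb (ep k)) / Vb (ep k) + (V (en k) - Vb (en k)) / Vb (en k).

Definition cos_gap (etab eta : nat -> R) (k : nat) : R :=
  cos (etab k) - cos (eta k) - sin (etab k) * (eta k - etab k).

Definition zedge (ep en : nat -> nat) (V Vb eta etab : nat -> R) (k : nat) : R :=
  (eta k - etab k) + sin (etab k) / cos (etab k) * wrel ep en V Vb k.

(* The part of the k-th edge term of [W2] that is of order three in the deviations. *)
Definition edge_rem (ep en : nat -> nat) (B : nat -> nat -> R) (V Vb eta etab : nat -> R)
    (k : nat) : R :=
  let up := V (ep k) - Vb (ep k) in
  let uq := V (en k) - Vb (en k) in
  let d := eta k - etab k in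
  B (ep k) (en k) *
    (Vb (ep k) * Vb (en k) * (cos_gap etab eta k - / 2 * cos (etab k) * (d * d))
     + (Vb (en k) * up + Vb (ep k) * uq + up * uq) * cos_gap etab eta k
     + up * uq * sin (etab k) * d).

Section Network.

Variables (n m : nat) (ep en : nat -> nat) (B : nat -> nat -> R) (Xd Xdp : nat -> R).
Hypothesis Hends : forall k, (k < m)%nat -> (ep k < n)%nat /\ (en k < n)%nat /\ ep k <> en k.
Hypothesis HBsym : forall i j, B i j = B j i.

Lemma Emat_split eta i j :
  Emat m ep en B Xd Xdp eta i j = (if Nat.eqb i j then Fd B Xd Xdp i else 0) +
   rsum m (fun k =>
     (if Nat.eqb (ep k) i && Nat.eqb (en k) j then - B (ep k) (en k) * cos (eta k) else 0)
     + (if Nat.eqb (en k) i && Nat.eqb (ep k) j then - B (ep k) (en k) * cos (eta k) else 0)).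
Proof.
  unfold Emat; destruct (Nat.eqb_spec i j) as [<-|Hij].
  - rewrite (rsum_ext _ _ (fun _ => 0)), rsum_0; [ring|].
    intros k Hk; destruct (Hends k Hk) as [_ [_ Hne]].
    destruct (Nat.eqb_spec (ep k) i), (Nat.eqb_spec (en k) i); simpl; try lia; ring.
  - rewrite Rplus_0_l; apply rsum_ext; intros k Hk; unfold edge_is.
    destruct (Nat.eqb_spec (ep k) i), (Nat.eqb_spec (en k) j), (Nat.eqb_spec (ep k) j),
      (Nat.eqb_spec (en k) i); simpl; subst; try lia; try ring.
    rewrite HBsym; ring.
Qed.

Lemma Emat_bilin eta (x y : nat -> R) :
  rsum n (fun i => x i * rsum n (fun j => Emat m ep en B Xd Xdp eta i j * y j)) =
  rsum n (fun i => Fd B Xd Xdp i * x i * y i)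
  - rsum m (fun k => B (ep k) (en k) * cos (eta k) * (x (ep k) * y (en k) + x (en k) * y (ep k))).
Proof.
  set (c := fun k => - B (ep k) (en k) * cos (eta k)).
  transitivity (rsum n (fun i => Fd B Xd Xdp i * x i * y i) +
     rsum m (fun k => rsum n (fun i => rsum n (fun j =>
        (if Nat.eqb (ep k) i && Nat.eqb (en k) j then x i * c k * y j else 0)
      + (if Nat.eqb (en k) i && Nat.eqb (ep k) j then x i * c k * y j else 0))))).
  - rewrite <- rsum_swap, <- rsum_plus; apply rsum_ext; intros i Hi.
    rewrite (rsum_ext _ _ (fun j => (if Nat.eqb i j then Fd B Xd Xdp i * y j else 0) +
        rsum m (fun k => ((if Nat.eqb (ep k) i && Nat.eqb (en k) j then c k else 0)
                  + (if Nat.eqb (en k) i && Nat.eqb (ep k) j then c k else 0)) * y j))).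
    2:{ intros j Hj; rewrite Emat_split, Rmult_plus_distr_r; f_equal.
        - destruct (Nat.eqb i j); ring.
        - rewrite Rmult_comm, <- rsum_scal; apply rsum_ext; intros; unfold c; ring. }
    rewrite rsum_plus, rsum_delta, rsum_swap, Rmult_plus_distr_l, <- rsum_scal by exact Hi.
    f_equal; [ring|]; apply rsum_ext; intros k Hk; rewrite <- rsum_scal; apply rsum_ext; intros j Hj.
    destruct (Nat.eqb (ep k) i && Nat.eqb (en k) j), (Nat.eqb (en k) i && Nat.eqb (ep k) j); ring.
  - unfold Rminus; f_equal; rewrite <- rsum_opp; apply rsum_ext; intros k Hk.
    destruct (Hends k Hk) as [Hp [Hq _]].
    rewrite (rsum_ext _ _ (fun i =>
        rsum n (fun j => if Nat.eqb (ep k) i && Nat.eqb (en k) j then x i * c k * y j else 0)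
      + rsum n (fun j => if Nat.eqb (en k) i && Nat.eqb (ep k) j then x i * c k * y j else 0)))
      by (intros; apply rsum_plus).
    rewrite rsum_plus, !(rsum2_delta n _ _ (fun i j => x i * c k * y j)) by assumption.
    unfold c; ring.
Qed.

Lemma absD_sum k h : (k < m)%nat -> rsum n (fun i => absD ep en i k * h i) = h (ep k) + h (en k).
Proof.
  intros Hk; destruct (Hends k Hk) as [Hp [Hq Hne]].
  rewrite (rsum_ext _ _ (fun i => (if Nat.eqb (ep k) i then h i else 0)
                                 + (if Nat.eqb (en k) i then h i else 0))).
  - rewrite rsum_plus, !rsum_delta by assumption; reflexivity.
  - intros i Hi; unfold absD.
    destruct (Nat.eqb_spec (ep k) i), (Nat.eqb_spec (en k) i); simpl; try lia; ring.
Qed.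

Variables (Efd etab Vb : nat -> R).
Hypothesis HVb : forall i, (i < n)%nat -> Vb i > 0.

Lemma qf_Qmat V :
  qf n (Qmat m ep en B Xd Xdp etab Vb) (fun i => V i - Vb i) =
  rsum n (fun i => (V i - Vb i) * rsum n (fun j => Emat m ep en B Xd Xdp etab i j * (V j - Vb j)))
  - rsum m (fun k => gam ep en B Vb k * (sin (etab k) * / cos (etab k) * sin (etab k))
                     * wrel ep en V Vb k * wrel ep en V Vb k).
Proof.
  unfold qf, Qmat.
  set (c := fun k => gam ep en B Vb k * (sin (etab k) * / cos (etab k) * sin (etab k))).
  set (a := fun i => (V i - Vb i) / Vb i).
  transitivity (rsum n (fun i => (V i - Vb i) * rsum n (fun j => Emat m ep en B Xd Xdp etab i j * (V j - Vb j)))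
     - rsum n (fun i => rsum n (fun j => rsum m (fun k => a i * absD ep en i k * c k * (absD ep en j k * a j))))).
  - rewrite <- rsum_minus; apply rsum_ext; intros i Hi.
    rewrite <- rsum_scal, <- rsum_minus; apply rsum_ext; intros j Hj.
    rewrite (rsum_ext m (fun k => a i * absD ep en i k * c k * (absD ep en j k * a j))
      (fun k => (a i * a j) * (absD ep en i k * gam ep en B Vb k *
        (sin (etab k) * / cos (etab k) * sin (etab k)) * absD ep en j k))) by (intros; unfold c; ring).
    rewrite rsum_scal; unfold a.
    pose proof (HVb i Hi); pose proof (HVb j Hj); field; lra.
  - f_equal.
    rewrite (rsum_ext n _ (fun i => rsum m (fun k => rsum n (fun j =>
        a i * absD ep en i k * c k * (absD ep en j k * a j))))) by (intros; apply rsum_swap).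
    rewrite rsum_swap; apply rsum_ext; intros k Hk.
    rewrite (rsum_ext n _ (fun i => (a i * absD ep en i k * c k) * rsum n (fun j => absD ep en j k * a j)))
      by (intros; apply rsum_scal).
    rewrite absD_sum by assumption.
    rewrite (rsum_ext n _ (fun i => (c k * (a (ep k) + a (en k))) * (absD ep en i k * a i)))
      by (intros; ring).
    rewrite rsum_scal, absD_sum by assumption; unfold wrel, a; fold (c k); ring.
Qed.

Hypothesis Hcos : forall k, (k < m)%nat -> cos (etab k) > 0.
Hypothesis Heq : forall i, (i < n)%nat -> EV n m ep en B Xd Xdp etab Vb i = Efd i.

Lemma W2_decomp eta V :
  W2 n m ep en B Xd Xdp Efd eta etab V Vb =
  / 2 * qf n (Qmat m ep en B Xd Xdp etab Vb) (fun i => V i - Vb i)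
  + / 2 * rsum m (fun k => gam ep en B Vb k * cos (etab k)
                           * (zedge ep en V Vb eta etab k * zedge ep en V Vb eta etab k))
  + rsum m (fun k => edge_rem ep en B V Vb eta etab k).
Proof.
  rewrite qf_Qmat, (Emat_bilin etab (fun i => V i - Vb i) (fun i => V i - Vb i)).
  assert (HEf : rsum n (fun i => Efd i * (V i - Vb i)) =
     rsum n (fun i => Fd B Xd Xdp i * (V i - Vb i) * Vb i)
     - rsum m (fun k => B (ep k) (en k) * cos (etab k)
                        * ((V (ep k) - Vb (ep k)) * Vb (en k) + (V (en k) - Vb (en k)) * Vb (ep k)))).
  { rewrite <- (Emat_bilin etab (fun i => V i - Vb i) Vb).
    apply rsum_ext; intros i Hi; rewrite <- Heq by assumption; unfold EV; ring. }
  assert (Hsq : rsum n (fun i => Fd B Xd Xdp i * (V i - Vb i) * (V i - Vb i)) =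
     - 2 * rsum n (fun i => Fd B Xd Xdp i * (V i - Vb i) * Vb i)
     + rsum n (fun i => V i * Fd B Xd Xdp i * V i) - rsum n (fun i => Vb i * Fd B Xd Xdp i * Vb i)).
  { rewrite <- rsum_scal, <- rsum_plus, <- rsum_minus; apply rsum_ext; intros; ring. }
  assert (Hedge : rsum m (fun k => - (gam ep en B V k * cos (eta k)) + gam ep en B Vb k * cos (etab k)
       - gam ep en B Vb k * sin (etab k) * (eta k - etab k)
       + B (ep k) (en k) * cos (etab k)
         * ((V (ep k) - Vb (ep k)) * Vb (en k) + (V (en k) - Vb (en k)) * Vb (ep k)))
     = rsum m (fun k => / 2 * (- (B (ep k) (en k) * cos (etab k)
          * ((V (ep k) - Vb (ep k)) * (V (en k) - Vb (en k))
             + (V (en k) - Vb (en k)) * (V (ep k) - Vb (ep k)))))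
        - / 2 * (gam ep en B Vb k * (sin (etab k) * / cos (etab k) * sin (etab k))
                 * wrel ep en V Vb k * wrel ep en V Vb k)
        + / 2 * (gam ep en B Vb k * cos (etab k)
                 * (zedge ep en V Vb eta etab k * zedge ep en V Vb eta etab k))
        + edge_rem ep en B V Vb eta etab k)).
  { apply rsum_ext; intros k Hk; destruct (Hends k Hk) as [Hp [Hq _]].
    pose proof (HVb _ Hp); pose proof (HVb _ Hq); pose proof (Hcos k Hk).
    unfold gam, edge_rem, cos_gap, zedge, wrel; cbv zeta; field; repeat split; lra. }
  repeat rewrite ?rsum_plus, ?rsum_minus, ?rsum_opp, ?rsum_scal in Hedge.
  change (rsum m (edge_rem ep en B V Vb eta etab))
    with (rsum m (fun k => edge_rem ep en B V Vb eta etab k)) in Hedge.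
  unfold W2; rewrite HEf; lra.
Qed.

Lemma EV_pairing eta V dV :
  rsum n (fun i => (EV n m ep en B Xd Xdp eta V i - Efd i) * dV i)
  = rsum n (fun i => Fd B Xd Xdp i * dV i * V i)
    - rsum m (fun k => B (ep k) (en k) * cos (eta k) * (dV (ep k) * V (en k) + dV (en k) * V (ep k)))
    - rsum n (fun i => Efd i * dV i).
Proof.
  rewrite <- Emat_bilin, <- rsum_minus; apply rsum_ext; intros; unfold EV; ring.
Qed.

Lemma dlim_gam_cos (eta V : R -> nat -> R) (deta dV : nat -> R) t :
  (forall k, (k < m)%nat -> derivable_pt_lim (fun s => eta s k) t (deta k)) ->
  (forall i, (i < n)%nat -> derivable_pt_lim (fun s => V s i) t (dV i)) ->
  derivable_pt_lim (fun s => rsum m (fun k => gam ep en B (V s) k * cos (eta s k))) t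
    (rsum m (fun k => B (ep k) (en k) * cos (eta t k) * (dV (ep k) * V t (en k) + dV (en k) * V t (ep k)))
     - rsum m (fun k => gam ep en B (V t) k * sin (eta t k) * deta k)).
Proof.
  intros Heta HV; rewrite <- rsum_minus.
  apply (dlim_rsum m (fun k s => gam ep en B (V s) k * cos (eta s k))); intros k Hk.
  destruct (Hends k Hk) as [Hp [Hq _]]; unfold gam.
  eapply dlim_mult; [eapply dlim_mult; [eapply dlim_mult; [apply HV; auto|apply HV; auto|reflexivity]
                                       |apply dlim_const; reflexivity|reflexivity]
                    |eapply dlim_cos; [apply Heta; auto|reflexivity]|].
  ring.
Qed.

Lemma W2_chain_rule (eta V : R -> nat -> R) (deta dV : nat -> R) t :
  (forall k, (k < m)%nat -> derivable_pt_lim (fun s => eta s k) t (deta k)) ->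
  (forall i, (i < n)%nat -> derivable_pt_lim (fun s => V s i) t (dV i)) ->
  derivable_pt_lim (fun s => W2 n m ep en B Xd Xdp Efd (eta s) etab (V s) Vb) t
    (rsum n (fun i => (EV n m ep en B Xd Xdp (eta t) (V t) i - Efd i) * dV i)
     + rsum m (fun k => (gam ep en B (V t) k * sin (eta t k) - gam ep en B Vb k * sin (etab k))
                        * deta k)).
Proof.
  intros Heta HV.
  assert (Hlin : derivable_pt_lim (fun s => rsum m (fun k => gam ep en B Vb k * sin (etab k) * (eta s k - etab k))) t
                   (rsum m (fun k => gam ep en B Vb k * sin (etab k) * deta k))).
  { apply (dlim_rsum m (fun k s => gam ep en B Vb k * sin (etab k) * (eta s k - etab k))); intros k Hk.
    eapply dlim_mult; [apply dlim_const; reflexivity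
                      |eapply dlim_minus; [apply Heta; auto|apply dlim_const; reflexivity|reflexivity]|ring]. }
  assert (HEfd : derivable_pt_lim (fun s => rsum n (fun i => Efd i * (V s i - Vb i))) t
                   (rsum n (fun i => Efd i * dV i))).
  { apply (dlim_rsum n (fun i s => Efd i * (V s i - Vb i))); intros i Hi.
    eapply dlim_mult; [apply dlim_const; reflexivity
                      |eapply dlim_minus; [apply HV; auto|apply dlim_const; reflexivity|reflexivity]|ring]. }
  assert (HF : derivable_pt_lim (fun s => rsum n (fun i => V s i * Fd B Xd Xdp i * V s i)) t
                 (rsum n (fun i => 2 * (Fd B Xd Xdp i * dV i * V t i)))).
  { apply (dlim_rsum n (fun i s => V s i * Fd B Xd Xdp i * V s i)); intros i Hi.
    eapply dlim_mult; [eapply dlim_mult; [apply HV; auto|apply dlim_const; reflexivity|reflexivity]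
                      |apply HV; auto|ring]. }
  unfold W2.
  eapply dlim_minus;
    [eapply dlim_plus;
       [eapply dlim_minus;
          [eapply dlim_minus;
             [eapply dlim_plus; [eapply dlim_opp; [exact (dlim_gam_cos eta V deta dV t Heta HV)|reflexivity]
                                |apply dlim_const; reflexivity|reflexivity]
             |exact Hlin|reflexivity]
          |exact HEfd|reflexivity]
       |eapply dlim_mult; [apply dlim_const; reflexivity|exact HF|reflexivity]|reflexivity]
    |apply dlim_const; reflexivity|].
  rewrite EV_pairing, rsum_scal,
    (rsum_ext m (fun k => (gam ep en B (V t) k * sin (eta t k) - gam ep en B Vb k * sin (etab k)) * deta k)
       (fun k => gam ep en B (V t) k * sin (eta t k) * deta k
                            - gam ep en B Vb k * sin (etab k) * deta k)) by (intros; ring).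
  rewrite rsum_minus; field.
Qed.

Variable Tc : nat -> R.
Hypothesis HT : forall i, (i < n)%nat -> Tc i > 0.

Lemma W2_dissipation (eta V v : R -> nat -> R) t :
  (forall k, (k < m)%nat -> derivable_pt_lim (fun s => eta s k) t (v t k)) ->
  (forall i, (i < n)%nat -> exists dV, derivable_pt_lim (fun s => V s i) t dV /\
       Tc i * dV = - EV n m ep en B Xd Xdp (eta t) (V t) i + Efd i) ->
  derivable_pt_lim (fun s => W2 n m ep en B Xd Xdp Efd (eta s) etab (V s) Vb) t
    (- rsum n (fun i => (EV n m ep en B Xd Xdp (eta t) (V t) i - Efd i) * / Tc i
                       * (EV n m ep en B Xd Xdp (eta t) (V t) i - Efd i))
     + rsum m (fun k => (gam ep en B (V t) k * sin (eta t k)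
                         - gam ep en B Vb k * sin (etab k)) * (v t k - 0))).
Proof.
  intros Heta HV.
  set (grad := fun i => EV n m ep en B Xd Xdp (eta t) (V t) i - Efd i).
  assert (HdV : forall i, (i < n)%nat -> derivable_pt_lim (fun s => V s i) t (- grad i / Tc i)).
  { intros i Hi; destruct (HV i Hi) as [dV [HdV HTdV]].
    replace (- grad i / Tc i) with dV; [exact HdV|].
    pose proof (HT i Hi); unfold grad; apply (Rmult_eq_reg_l (Tc i)); [|lra].
    rewrite HTdV; field; lra. }
  change (derivable_pt_lim (fun s => W2 n m ep en B Xd Xdp Efd (eta s) etab (V s) Vb) t
    (- rsum n (fun i => grad i * / Tc i * grad i)
     + rsum m (fun k => (gam ep en B (V t) k * sin (eta t k)
                         - gam ep en B Vb k * sin (etab k)) * (v t k - 0)))).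
  replace (- rsum n (fun i => grad i * / Tc i * grad i)) with (rsum n (fun i => grad i * (- grad i / Tc i))).
  - rewrite (rsum_ext m _ (fun k => (gam ep en B (V t) k * sin (eta t k)
                                    - gam ep en B Vb k * sin (etab k)) * v t k)) by (intros; ring).
    exact (W2_chain_rule eta V (v t) (fun i => - grad i / Tc i) t Heta HdV).
  - rewrite <- rsum_opp; apply rsum_ext; intros i Hi; pose proof (HT i Hi); field; lra.
Qed.

End Network.

Lemma W2_at_equilibrium n m ep en B Xd Xdp Efd etab Vb :
  W2 n m ep en B Xd Xdp Efd etab etab Vb Vb = 0.
Proof.
  unfold W2.
  rewrite (rsum_ext m (fun k => gam ep en B Vb k * sin (etab k) * (etab k - etab k)) (fun _ => 0))
    by (intros; ring).
  rewrite (rsum_ext n (fun i => Efd i * (Vb i - Vb i)) (fun _ => 0)) by (intros; ring).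
  rewrite !rsum_0; ring.
Qed.

Lemma edge_rem_bound ep en B V Vb eta etab k dl :
  B (ep k) (en k) > 0 -> Vb (ep k) > 0 -> Vb (en k) > 0 -> 0 < dl <= 1 ->
  Rabs (eta k - etab k) <= dl ->
  Rabs (V (ep k) - Vb (ep k)) <= dl -> Rabs (V (en k) - Vb (en k)) <= dl ->
  Rabs (edge_rem ep en B V Vb eta etab k)
  <= dl * (B (ep k) (en k) * (Vb (ep k) * Vb (en k) + Vb (ep k) + Vb (en k) + 1))
     * ((eta k - etab k) * (eta k - etab k)
        + ((V (ep k) - Vb (ep k)) * (V (ep k) - Vb (ep k))
           + (V (en k) - Vb (en k)) * (V (en k) - Vb (en k)))).
Proof.
  intros HB Hp Hq Hdl Hd Hup Huq; unfold edge_rem; cbv zeta.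
  destruct (cos_gap_bounds (etab k) (eta k) dl Hd ltac:(lra)) as [Hg Hr]; unfold cos_gap.
  set (up := V (ep k) - Vb (ep k)) in *; set (uq := V (en k) - Vb (en k)) in *.
  set (Bk := B (ep k) (en k)) in *; set (vp := Vb (ep k)) in *; set (vq := Vb (en k)) in *.
  set (d := eta k - etab k) in *.
  set (g := cos (etab k) - cos (eta k) - sin (etab k) * d) in *.
  set (r := g - / 2 * cos (etab k) * (d * d)) in *.
  assert (dd : 0 <= d * d) by apply Rle_0_sqr.
  assert (Hsb : Rabs (sin (etab k)) <= 1) by (apply Rabs_le, SIN_bound).
  assert (T1 : Rabs (vp * vq * r) <= vp * vq * (dl * (d * d))).
  { apply abs_mul_le; [rewrite Rabs_right; [lra|apply Rle_ge; nra]|exact Hr]. }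
  assert (T2 : Rabs ((vq * up + vp * uq + up * uq) * g) <= ((vq + vp + 1) * dl) * (d * d)).
  { apply abs_mul_le; [|exact Hg].
    assert (Rabs (up * uq) <= dl * 1) by (apply abs_mul_le; lra).
    assert (Rabs (vq * up) <= vq * dl) by (apply abs_mul_le; [rewrite Rabs_right|]; lra).
    assert (Rabs (vp * uq) <= vp * dl) by (apply abs_mul_le; [rewrite Rabs_right|]; lra).
    pose proof (Rabs_triang (vq * up + vp * uq) (up * uq)).
    pose proof (Rabs_triang (vq * up) (vp * uq)); lra. }
  assert (T3 : Rabs (up * uq * sin (etab k) * d) <= (up * up + uq * uq) / 2 * (1 * dl)).
  { rewrite Rmult_assoc; apply abs_mul_le; [|apply abs_mul_le; assumption].
    rewrite Rabs_mult, <- (sqr_Rabs up), <- (sqr_Rabs uq).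
    pose proof (Rle_0_sqr (Rabs up - Rabs uq)); unfold Rsqr in *; lra. }
  pose proof (Rabs_triang (vp * vq * r + (vq * up + vp * uq + up * uq) * g) (up * uq * sin (etab k) * d)).
  pose proof (Rabs_triang (vp * vq * r) ((vq * up + vp * uq + up * uq) * g)).
  rewrite Rabs_mult, (Rabs_right Bk) by lra.
  assert (0 <= up * up) by apply Rle_0_sqr; assert (0 <= uq * uq) by apply Rle_0_sqr.
  assert (0 <= vp * vq) by nra.
  apply Rle_trans with (Bk * (vp * vq * (dl * (d * d)) + (vq + vp + 1) * dl * (d * d)
                              + (up * up + uq * uq) / 2 * (1 * dl))); [apply Rmult_le_compat_l; lra|].
  assert (0 <= dl * Bk * ((vp * vq + vp + vq) * (up * up + uq * uq) + (up * up + uq * uq) / 2)).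
  { apply Rmult_le_pos; [nra|]; assert (0 <= (vp * vq + vp + vq) * (up * up + uq * uq)) by nra; lra. }
  lra.
Qed.

Lemma dev_sq_le d t a b up uq :
  d * d <= 2 * ((d + t * (a * up + b * uq)) * (d + t * (a * up + b * uq)))
           + 2 * (t * t * (2 * (a * a + b * b))) * (up * up + uq * uq).
Proof.
  set (w := a * up + b * uq); set (z := d + t * w).
  assert (Hw : w * w <= 2 * (a * a + b * b) * (up * up + uq * uq)).
  { unfold w; pose proof (Rle_0_sqr (a * up - b * uq)); pose proof (Rle_0_sqr (a * uq));
    pose proof (Rle_0_sqr (b * up)); unfold Rsqr in *; nra. }
  assert (Hd : d * d <= 2 * (z * z) + 2 * (t * t) * (w * w)).
  { replace d with (z - t * w) by (unfold z; ring).
    pose proof (Rle_0_sqr (z + t * w)); unfold Rsqr in *; nra. }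
  pose proof (Rle_0_sqr t); unfold Rsqr in *; nra.
Qed.

Lemma coercive_combination c a G M : 0 < c -> 0 < a -> 0 <= G -> 0 <= M ->
  exists k, 0 < k /\ forall D U Z, 0 <= U -> 0 <= Z -> D <= 2 * Z + 4 * G * M * U ->
    k * (D + U) <= c / 2 * U + a / 2 * Z.
Proof.
  intros Hc Ha HG HM.
  assert (HGM : 0 <= G * M) by (apply Rmult_le_pos; assumption).
  set (k := Rmin (a / 4) (c / (2 * (4 * G * M + 1)))).
  assert (Hk1 : k <= a / 4) by apply Rmin_l.
  assert (Hk2 : k * (2 * (4 * G * M + 1)) <= c).
  { pose proof (Rmin_r (a / 4) (c / (2 * (4 * G * M + 1)))) as H; fold k in H.
    apply (Rmult_le_compat_r (2 * (4 * G * M + 1))) in H; [|lra].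
    replace (c / (2 * (4 * G * M + 1)) * (2 * (4 * G * M + 1))) with c in H by (field; lra).
    exact H. }
  exists k; split; [apply Rmin_glb_lt; apply Rdiv_lt_0_compat; lra|].
  intros D U Z HU HZ HD.
  assert (Hk : 0 < k) by (apply Rmin_glb_lt; apply Rdiv_lt_0_compat; lra).
  assert (k * D <= k * (2 * Z + 4 * G * M * U)) by (apply Rmult_le_compat_l; lra).
  assert (k * (2 * Z) <= a / 2 * Z) by nra.
  assert (k * (4 * G * M * U) + k * U <= c / 2 * U).
  { replace (k * (4 * G * M * U) + k * U) with (k * (2 * (4 * G * M + 1)) * U / 2) by field.
    apply Rmult_le_compat_r with (r := U) in Hk2; [lra|assumption]. }
  lra.
Qed.

Lemma small_radius kap C : 0 < kap -> 0 <= C -> exists dl, 0 < dl <= 1 /\ dl * C <= kap / 2.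
Proof.
  intros Hkap HC; set (dl := Rmin (1 / 2) (kap / (2 * (C + 1)))).
  pose proof (Rmin_l (1 / 2) (kap / (2 * (C + 1)))) as H1.
  pose proof (Rmin_r (1 / 2) (kap / (2 * (C + 1)))) as H2; fold dl in H1, H2.
  assert (Hdl : 0 < dl) by (apply Rmin_glb_lt; [lra|apply Rdiv_lt_0_compat; lra]).
  exists dl; split; [lra|].
  apply (Rmult_le_compat_r (2 * (C + 1))) in H2; [|lra].
  replace (kap / (2 * (C + 1)) * (2 * (C + 1))) with kap in H2 by (field; lra).
  nra.
Qed.

Lemma quadratic_dominates L Rm kap dl K M D U P :
  0 <= dl -> 0 <= K -> 0 <= M -> 0 <= D -> 0 <= U -> 0 < D + U -> 0 < kap ->
  P <= M * (2 * U) -> dl * (K * (2 * M + 1)) <= kap / 2 ->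
  kap * (D + U) <= L -> Rabs Rm <= dl * K * (D + P) -> 0 < L + Rm.
Proof.
  intros Hdl HK HM HD HU HDU Hkap HP Hsmall HL HR.
  pose proof (Rle_abs (- Rm)) as Hneg; rewrite Rabs_Ropp in Hneg.
  assert (HdlK : 0 <= dl * K) by (apply Rmult_le_pos; assumption).
  assert (dl * K * P <= dl * K * (M * (2 * U))) by (apply Rmult_le_compat_l; assumption).
  assert (0 <= dl * K * M * D) by (repeat apply Rmult_le_pos; assumption).
  assert (0 <= dl * K * M * U) by (repeat apply Rmult_le_pos; assumption).
  assert (dl * (K * (2 * M + 1)) * (D + U) <= kap / 2 * (D + U)) by (apply Rmult_le_compat_r; lra).
  assert (0 < kap * (D + U)) by (apply Rmult_lt_0_compat; lra).
  nra.
Qed.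

Section LocalPositivity.

Variables (n m : nat) (ep en : nat -> nat) (B : nat -> nat -> R) (Xd Xdp Efd etab Vb : nat -> R).
Hypothesis Hends : forall k, (k < m)%nat -> (ep k < n)%nat /\ (en k < n)%nat /\ ep k <> en k.
Hypothesis HBsym : forall i j, B i j = B j i.
Hypothesis HBpos : forall k, (k < m)%nat -> B (ep k) (en k) > 0.
Hypothesis HVb : forall i, (i < n)%nat -> Vb i > 0.
Hypothesis Hcos : forall k, (k < m)%nat -> cos (etab k) > 0.
Hypothesis Heq : forall i, (i < n)%nat -> EV n m ep en B Xd Xdp etab Vb i = Efd i.
Hypothesis Hstar : posdef n (Qmat m ep en B Xd Xdp etab Vb).

Lemma edge_sq_sum_le (u : nat -> R) :
  rsum m (fun k => u (ep k) * u (ep k) + u (en k) * u (en k))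
  <= INR m * (2 * rsum n (fun i => u i * u i)).
Proof.
  apply rsum_le_const; intros k Hk; destruct (Hends k Hk) as [Hp [Hq _]].
  pose proof (rsum_term_le n (fun i => u i * u i) _ (fun i _ => Rle_0_sqr (u i)) Hp).
  pose proof (rsum_term_le n (fun i => u i * u i) _ (fun i _ => Rle_0_sqr (u i)) Hq).
  simpl in *; lra.
Qed.

Lemma angle_dev_sum_le G eta V :
  (forall k, (k < m)%nat ->
     sin (etab k) / cos (etab k) * (sin (etab k) / cos (etab k))
     * (2 * (/ Vb (ep k) * / Vb (ep k) + / Vb (en k) * / Vb (en k))) <= G) ->
  rsum m (fun k => (eta k - etab k) * (eta k - etab k))
  <= 2 * rsum m (fun k => zedge ep en V Vb eta etab k * zedge ep en V Vb eta etab k)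
     + 2 * (G * rsum m (fun k => (V (ep k) - Vb (ep k)) * (V (ep k) - Vb (ep k))
                                  + (V (en k) - Vb (en k)) * (V (en k) - Vb (en k)))).
Proof.
  intros HG; rewrite <- !rsum_scal, <- rsum_plus; apply rsum_le; intros k Hk.
  destruct (Hends k Hk) as [Hp [Hq _]]; pose proof (HVb _ Hp); pose proof (HVb _ Hq).
  set (up := V (ep k) - Vb (ep k)); set (uq := V (en k) - Vb (en k)).
  assert (Hz : zedge ep en V Vb eta etab k
               = eta k - etab k + sin (etab k) / cos (etab k) * (/ Vb (ep k) * up + / Vb (en k) * uq)).
  { pose proof (Hcos k Hk); unfold zedge, wrel; fold up uq; field; repeat split; lra. }
  rewrite Hz; eapply Rle_trans; [apply dev_sq_le|].
  apply Rplus_le_compat_l; rewrite Rmult_assoc; apply Rmult_le_compat_l; [lra|].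
  apply Rmult_le_compat_r; [pose proof (Rle_0_sqr up); pose proof (Rle_0_sqr uq); unfold Rsqr in *; lra|].
  apply HG, Hk.
Qed.

Lemma edge_rem_sum_bound K dl eta V :
  (forall k, (k < m)%nat ->
     B (ep k) (en k) * (Vb (ep k) * Vb (en k) + Vb (ep k) + Vb (en k) + 1) <= K) ->
  0 < dl <= 1 ->
  (forall k, (k < m)%nat -> Rabs (eta k - etab k) <= dl) ->
  (forall i, (i < n)%nat -> Rabs (V i - Vb i) <= dl) ->
  Rabs (rsum m (fun k => edge_rem ep en B V Vb eta etab k))
  <= dl * K * (rsum m (fun k => (eta k - etab k) * (eta k - etab k))
               + rsum m (fun k => (V (ep k) - Vb (ep k)) * (V (ep k) - Vb (ep k))
                                  + (V (en k) - Vb (en k)) * (V (en k) - Vb (en k)))).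
Proof.
  intros HK Hdl Heta HV; eapply Rle_trans; [apply rsum_abs|].
  rewrite <- rsum_plus, <- rsum_scal; apply rsum_le; intros k Hk.
  destruct (Hends k Hk) as [Hp [Hq _]].
  eapply Rle_trans; [apply edge_rem_bound; auto; exact Hdl|].
  assert (0 <= (eta k - etab k) * (eta k - etab k)
               + ((V (ep k) - Vb (ep k)) * (V (ep k) - Vb (ep k))
                  + (V (en k) - Vb (en k)) * (V (en k) - Vb (en k)))).
  { pose proof (Rle_0_sqr (eta k - etab k)); pose proof (Rle_0_sqr (V (ep k) - Vb (ep k)));
    pose proof (Rle_0_sqr (V (en k) - Vb (en k))); unfold Rsqr in *; lra. }
  apply Rmult_le_compat_r; [assumption|].
  apply Rmult_le_compat_l; [lra|apply HK, Hk].
Qed.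

Lemma deviation_sq_pos (eta V : nat -> R) :
  ((exists k, (k < m)%nat /\ eta k <> etab k) \/ (exists i, (i < n)%nat /\ V i <> Vb i)) ->
  0 < rsum m (fun k => (eta k - etab k) * (eta k - etab k))
      + rsum n (fun i => (V i - Vb i) * (V i - Vb i)).
Proof.
  assert (HD : 0 <= rsum m (fun k => (eta k - etab k) * (eta k - etab k)))
    by (apply rsum_nonneg; intros; apply Rle_0_sqr).
  assert (HU : 0 <= rsum n (fun i => (V i - Vb i) * (V i - Vb i)))
    by (apply rsum_nonneg; intros; apply Rle_0_sqr).
  intros [[k [Hk Hne]]|[i [Hi Hne]]].
  - enough (0 < rsum m (fun k => (eta k - etab k) * (eta k - etab k))) by lra.
    apply (rsum_pos _ _ k); [intros; apply Rle_0_sqr|assumption|].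
    apply Rsqr_pos_lt; lra.
  - enough (0 < rsum n (fun i => (V i - Vb i) * (V i - Vb i))) by lra.
    apply (rsum_pos _ _ i); [intros; apply Rle_0_sqr|assumption|].
    apply Rsqr_pos_lt; lra.
Qed.

Lemma gam_pos k : (k < m)%nat -> 0 < gam ep en B Vb k.
Proof.
  intros Hk; destruct (Hends k Hk) as [Hp [Hq _]]; unfold gam.
  pose proof (HVb _ Hp); pose proof (HVb _ Hq); pose proof (HBpos k Hk).
  repeat apply Rmult_lt_0_compat; lra.
Qed.

Lemma W2_local_posdef : exists delta, delta > 0 /\
  forall eta V : nat -> R,
    (forall k, (k < m)%nat -> Rabs (eta k - etab k) < delta) ->
    (forall i, (i < n)%nat -> Rabs (V i - Vb i) < delta) ->
    ((exists k, (k < m)%nat /\ eta k <> etab k) \/ (exists i, (i < n)%nat /\ V i <> Vb i)) ->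
    W2 n m ep en B Xd Xdp Efd eta etab V Vb > 0.
Proof.
  destruct (posdef_coercive n _ Hstar) as [c [Hc Hcoer]].
  destruct (finite_pos_lower_bound m (fun k => gam ep en B Vb k * cos (etab k))) as [a [Ha Hak]].
  { intros k Hk; apply Rmult_lt_0_compat; [apply gam_pos|apply Hcos]; assumption. }
  destruct (finite_upper_bound m (fun k => sin (etab k) / cos (etab k) * (sin (etab k) / cos (etab k))
     * (2 * (/ Vb (ep k) * / Vb (ep k) + / Vb (en k) * / Vb (en k))))) as [G [HG HGk]].
  destruct (finite_upper_bound m (fun k =>
     B (ep k) (en k) * (Vb (ep k) * Vb (en k) + Vb (ep k) + Vb (en k) + 1))) as [K [HK HKk]].
  set (M := INR m); assert (HM : 0 <= M) by apply pos_INR.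
  destruct (coercive_combination c a G M Hc Ha HG HM) as [kap [Hkap Hcomb]].
  destruct (small_radius kap (K * (2 * M + 1)) Hkap ltac:(apply Rmult_le_pos; lra))
    as [dl [Hdl Hsmall]].
  exists dl; split; [lra|]; intros eta V Heta HV Hnz.
  rewrite W2_decomp by assumption.
  pose proof (angle_dev_sum_le G eta V HGk) as HDZ.
  pose proof (edge_sq_sum_le (fun i => V i - Vb i)) as HPU; cbv beta in HPU.
  pose proof (edge_rem_sum_bound K dl eta V HKk Hdl (fun k Hk => Rlt_le _ _ (Heta k Hk))
                (fun i Hi => Rlt_le _ _ (HV i Hi))) as HR.
  pose proof (Hcoer (fun i => V i - Vb i)) as HQ; cbv beta in HQ.
  set (D := rsum m (fun k => (eta k - etab k) * (eta k - etab k))) in *.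
  set (U := rsum n (fun i => (V i - Vb i) * (V i - Vb i))) in *.
  set (Z := rsum m (fun k => zedge ep en V Vb eta etab k * zedge ep en V Vb eta etab k)) in *.
  set (P := rsum m (fun k => (V (ep k) - Vb (ep k)) * (V (ep k) - Vb (ep k))
                             + (V (en k) - Vb (en k)) * (V (en k) - Vb (en k)))) in *.
  assert (HD : 0 <= D) by (apply rsum_nonneg; intros; apply Rle_0_sqr).
  assert (HU : 0 <= U) by (apply rsum_nonneg; intros; apply Rle_0_sqr).
  assert (HZ : 0 <= Z) by (apply rsum_nonneg; intros; apply Rle_0_sqr).
  assert (Hsq : a * Z <= rsum m (fun k => gam ep en B Vb k * cos (etab k)
                          * (zedge ep en V Vb eta etab k * zedge ep en V Vb eta etab k))).
  { unfold Z; rewrite <- rsum_scal; apply rsum_le; intros k Hk.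
    apply Rmult_le_compat_r; [apply Rle_0_sqr|apply Hak, Hk]. }
  assert (HGP : G * P <= G * (M * (2 * U))) by (apply Rmult_le_compat_l; assumption).
  pose proof (Hcomb D U Z HU HZ ltac:(lra)) as Hlow.
  apply (quadratic_dominates _ _ kap dl K M D U P); try assumption; try lra.
  exact (deviation_sq_pos eta V Hnz).
Qed.

End LocalPositivity.

Theorem proposition2
  (n m : nat) (ep en : nat -> nat) (B : nat -> nat -> R)
  (Xd Xdp Tc Efd : nat -> R) (etab Vb : nat -> R)
  (* graph: well-formed, simple, connected *)
  (Hends : forall k, (k < m)%nat -> (ep k < n)%nat /\ (en k < n)%nat /\ ep k <> en k)
  (Hsimple : forall k k', (k < m)%nat -> (k' < m)%nat -> k <> k' ->
       ~ (ep k' = ep k /\ en k' = en k) /\ ~ (ep k' = en k /\ en k' = ep k))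
  (Hconn : connected n m ep en)
  (* susceptances and reactances *)
  (HBsym : forall i j, B i j = B j i)
  (HBpos : forall k, (k < m)%nat -> B (ep k) (en k) > 0)
  (HBii : forall i, (i < n)%nat -> B i i < 0 /\
       Rabs (B i i) > rsum m (fun k => absD ep en i k * Rabs (B i (other ep en i k))))
  (HX : forall i, (i < n)%nat -> Xd i > Xdp i /\ Xdp i > 0)
  (HT : forall i, (i < n)%nat -> Tc i > 0)
  (* equilibrium *)
  (Hetab : forall k, (k < m)%nat -> - (PI / 2) < etab k < PI / 2)
  (HVb : forall i, (i < n)%nat -> Vb i > 0)
  (Heq : forall i, (i < n)%nat -> EV n m ep en B Xd Xdp etab Vb i = Efd i)
  (Hstar : posdef n (Qmat m ep en B Xd Xdp etab Vb)) :
  (* W2 positive definite near (etab, Vb) *)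
  (W2 n m ep en B Xd Xdp Efd etab etab Vb Vb = 0 /\
   exists delta, delta > 0 /\
     forall eta V : nat -> R,
       (forall k, (k < m)%nat -> Rabs (eta k - etab k) < delta) ->
       (forall i, (i < n)%nat -> Rabs (V i - Vb i) < delta) ->
       ((exists k, (k < m)%nat /\ eta k <> etab k) \/
        (exists i, (i < n)%nat /\ V i <> Vb i)) ->
       W2 n m ep en B Xd Xdp Efd eta etab V Vb > 0)
  /\
  (* dissipation equality along solutions *)
  (forall (eta V v : R -> nat -> R),
     (forall t k, (k < m)%nat -> derivable_pt_lim (fun s => eta s k) t (v t k)) ->
     (forall t i, (i < n)%nat -> exists dV, derivable_pt_lim (fun s => V s i) t dV /\
          Tc i * dV = - EV n m ep en B Xd Xdp (eta t) (V t) i + Efd i) ->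
     forall t,
       derivable_pt_lim (fun s => W2 n m ep en B Xd Xdp Efd (eta s) etab (V s) Vb) t
         (- rsum n (fun i => (EV n m ep en B Xd Xdp (eta t) (V t) i - Efd i) * / Tc i
                            * (EV n m ep en B Xd Xdp (eta t) (V t) i - Efd i))
          + rsum m (fun k => (gam ep en B (V t) k * sin (eta t k)
                              - gam ep en B Vb k * sin (etab k)) * (v t k - 0)))).
Proof.
  assert (Hcos : forall k, (k < m)%nat -> cos (etab k) > 0)
    by (intros k Hk; destruct (Hetab k Hk); apply cos_gt_0; lra).
  split; [split|].
  - apply W2_at_equilibrium.
  - exact (W2_local_posdef n m ep en B Xd Xdp Efd etab Vb Hends HBsym HBpos HVb Hcos Heq Hstar).
  - intros eta V v Heta HV t.
    exact (W2_dissipation n m ep en B Xd Xdp Hends HBsym Efd etab Vb Tc HT eta V v t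
             (Heta t) (HV t)).
Qed.
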